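(* Let $\{a_n\}_{n\ge 1}$ be a sequence of positive real numbers and let $\lambda>0$. Define \[ m_1=\liminf_{n\to\infty}\ln(\lambda n)\left(\tfrac12-\tfrac{a_{2n}}{a_n}\right),\quad m_2=\liminf_{n\to\infty}\ln(\lambda n)\left(\tfrac12-\tfrac{a_{2n+1}}{a_n}\right), \] \[ M_1=\limsup_{n\to\infty}\ln(\lambda n)\left(\tfrac12-\tfrac{a_{2n}}{a_n}\right),\quad M_2=\limsup_{n\to\infty}\ln(\lambda n)\left(\tfrac12-\tfrac{a_{2n+1}}{a_n}\right), \] and set $m=\min\{m_1,m_2\}$, $M=\max\{M_1,M_2\}$. Then: (i) if $m>\frac{\ln 2}{2}$, the series $\sum_{n=1}^\infty a_n$ converges; (ii) if $M<\frac{\ln 2}{2}$, the series $\sum_{n=1}^\infty a_n$ diverges.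
   Context: Here $\ln$ denotes the natural logarithm; liminf and limsup are taken in the extended reals. *)

From Stdlib Require Import Reals.
From Coquelicot Require Import Coquelicot.
Open Scope R_scope.

(* The sequence  ln(lambda n) (1/2 - a_{2n+e}/a_n)  (e = 0 or 1).
   Its value at n = 0 is irrelevant for liminf/limsup. *)
Definition ratio_seq (a : nat -> R) (lambda : R) (e : nat) (n : nat) : R :=
  ln (lambda * INR n) * (1/2 - a (2 * n + e)%nat / a n).

Definition Rbar_max (x y : Rbar) : Rbar :=
  match Rbar_le_dec x y with left _ => y | right _ => x end.

From Stdlib Require Import Reals Lra Lia.
From Coquelicot Require Import Coquelicot.
Open Scope R_scope.

(* Group the terms into the dyadic blocks T_k = a_(2^k) + ... + a_(2^(k+1)-1):
   the series converges iff the partial sums of (T_k) are bounded.  The block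
   T_(k+1) is the sum of a_(2n) + a_(2n+1) over n in block k, where ln(lambda n)
   lies between D_k = ln(lambda 2^k) and D_(k+1) = D_k + ln 2.  So if the liminf
   exceeds q > ln 2 / 2 then eventually T_(k+1) <= (1 - 2q/D_(k+1)) T_k, and
   Kummer's test with weights D_(k+1) gives convergence; if the limsup is below
   q < ln 2 / 2 then T_(k+1) >= (1 - 2q/D_k) T_k, so D_k T_k is eventually
   nondecreasing, T_k >= A / D_k, and the blocks diverge like the harmonic
   series. *)

Lemma LimInf_seq_gt (u : nat -> R) (x : R) :
  Rbar_lt x (LimInf_seq u) ->
  exists q N, x < q /\ forall n, (N <= n)%nat -> q < u n.
Proof.
  unfold LimInf_seq; destruct (ex_LimInf_seq u) as [[l| |] Hl]; simpl; intros Hx.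
  - assert (Heps : 0 < (l - x) / 2) by lra.
    destruct (Hl (mkposreal _ Heps)) as [_ [N HN]].
    exists ((x + l) / 2), N; split; [lra|].
    intros n Hn; specialize (HN n Hn); simpl in HN; lra.
  - destruct (Hl (x + 1)) as [N HN].
    exists (x + 1), N; split; [lra | exact HN].
  - contradiction.
Qed.

Lemma LimSup_seq_lt (u : nat -> R) (x : R) :
  Rbar_lt (LimSup_seq u) x ->
  exists q N, q < x /\ forall n, (N <= n)%nat -> u n < q.
Proof.
  unfold LimSup_seq; destruct (ex_LimSup_seq u) as [[l| |] Hl]; simpl; intros Hx.
  - assert (Heps : 0 < (x - l) / 2) by lra.
    destruct (Hl (mkposreal _ Heps)) as [_ [N HN]].
    exists ((x + l) / 2), N; split; [lra|].
    intros n Hn; specialize (HN n Hn); simpl in HN; lra.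
  - contradiction.
  - destruct (Hl (x - 1)) as [N HN].
    exists (x - 1), N; split; [lra | exact HN].
Qed.

Lemma Rbar_min_LimInf_seq_gt (u v : nat -> R) (x : R) :
  Rbar_lt x (Rbar_min (LimInf_seq u) (LimInf_seq v)) ->
  exists q N, x < q /\ forall n, (N <= n)%nat -> q < u n /\ q < v n.
Proof.
  intros Hx.
  destruct (LimInf_seq_gt u x) as (qu & Nu & Hqu & HNu).
  { eapply Rbar_lt_le_trans; [exact Hx | apply Rbar_min_l]. }
  destruct (LimInf_seq_gt v x) as (qv & Nv & Hqv & HNv).
  { eapply Rbar_lt_le_trans; [exact Hx | apply Rbar_min_r]. }
  exists (Rmin qu qv), (Nat.max Nu Nv); split; [now apply Rmin_glb_lt|].
  intros n Hn; split.
  - eapply Rle_lt_trans; [apply Rmin_l | apply HNu; lia].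
  - eapply Rle_lt_trans; [apply Rmin_r | apply HNv; lia].
Qed.

Lemma Rbar_max_lt (x y : Rbar) (z : R) :
  Rbar_lt (Rbar_max x y) z -> Rbar_lt x z /\ Rbar_lt y z.
Proof.
  unfold Rbar_max; destruct (Rbar_le_dec x y) as [Hxy|Hxy]; intros Hz; split; auto.
  - eapply Rbar_le_lt_trans; eauto.
  - eapply Rbar_lt_trans; [apply Rbar_not_le_lt; exact Hxy | exact Hz].
Qed.

Lemma Rbar_max_LimSup_seq_lt (u v : nat -> R) (x : R) :
  Rbar_lt (Rbar_max (LimSup_seq u) (LimSup_seq v)) x ->
  exists q N, q < x /\ forall n, (N <= n)%nat -> u n < q /\ v n < q.
Proof.
  intros [Hu Hv]%Rbar_max_lt.
  destruct (LimSup_seq_lt u x Hu) as (qu & Nu & Hqu & HNu).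
  destruct (LimSup_seq_lt v x Hv) as (qv & Nv & Hqv & HNv).
  exists (Rmax qu qv), (Nat.max Nu Nv); split; [now apply Rmax_lub_lt|].
  intros n Hn; split.
  - eapply Rlt_le_trans; [apply HNu; lia | apply Rmax_l].
  - eapply Rlt_le_trans; [apply HNv; lia | apply Rmax_r].
Qed.

Fixpoint block_sum (f : nat -> R) (m l : nat) : R :=
  match l with
  | O => 0
  | S l => block_sum f m l + f (m + l)%nat
  end.

Lemma block_sum_add f m l1 l2 :
  block_sum f m (l1 + l2) = block_sum f m l1 + block_sum f (m + l1) l2.
Proof.
  induction l2 as [|l2 IH]; simpl.
  - rewrite Nat.add_0_r; ring.
  - rewrite Nat.add_succ_r; simpl; rewrite IH, Nat.add_assoc; ring.
Qed.

Lemma block_sum_le f g m l :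
  (forall i, (m <= i < m + l)%nat -> f i <= g i) ->
  block_sum f m l <= block_sum g m l.
Proof.
  induction l as [|l IH]; simpl; intros H; [lra|].
  apply Rplus_le_compat; [apply IH; intros; apply H|apply H]; lia.
Qed.

Lemma block_sum_scal r f m l :
  block_sum (fun n => r * f n) m l = r * block_sum f m l.
Proof. induction l as [|l IH]; simpl; [|rewrite IH]; ring. Qed.

Lemma block_sum_ge0 f m l :
  (forall i, (m <= i < m + l)%nat -> 0 <= f i) -> 0 <= block_sum f m l.
Proof.
  induction l as [|l IH]; simpl; intros H; [lra|].
  apply Rplus_le_le_0_compat; [apply IH; intros; apply H|apply H]; lia.
Qed.

Lemma block_sum_le_length f m l1 l2 :
  (forall i, (m <= i)%nat -> 0 <= f i) -> (l1 <= l2)%nat ->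
  block_sum f m l1 <= block_sum f m l2.
Proof.
  intros Hf Hl; replace l2 with (l1 + (l2 - l1))%nat by lia.
  rewrite block_sum_add.
  assert (0 <= block_sum f (m + l1) (l2 - l1)) by (apply block_sum_ge0; intros; apply Hf; lia).
  lra.
Qed.

Lemma block_sum_pairs f m l :
  block_sum f (2 * m) (2 * l) = block_sum (fun n => f (2 * n)%nat + f (2 * n + 1)%nat) m l.
Proof.
  induction l as [|l IH]; [reflexivity|].
  replace (2 * S l)%nat with (S (S (2 * l))) by lia; simpl in *; rewrite IH.
  replace (m + (m + 0) + S (l + (l + 0)))%nat with ((m + l) + (m + l + 0) + 1)%nat by lia.
  replace (m + (m + 0) + (l + (l + 0)))%nat with ((m + l) + (m + l + 0))%nat by lia.
  ring.
Qed.

Definition dyadic_block (a : nat -> R) (k : nat) : R := block_sum a (2 ^ k) (2 ^ k).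

Lemma block_sum_dyadic a K :
  block_sum a 1 (2 ^ K - 1) = block_sum (dyadic_block a) 0 K.
Proof.
  induction K as [|K IH]; [reflexivity|]; simpl.
  pose proof (Nat.pow_gt_lin_r 2 K ltac:(lia)).
  replace (2 ^ K + (2 ^ K + 0) - 1)%nat with ((2 ^ K - 1) + 2 ^ K)%nat by lia.
  rewrite block_sum_add, IH; unfold dyadic_block.
  now replace (1 + (2 ^ K - 1))%nat with (2 ^ K)%nat by lia.
Qed.

Lemma dyadic_block_succ a k :
  dyadic_block a (S k) = block_sum (fun n => a (2 * n)%nat + a (2 * n + 1)%nat) (2 ^ k) (2 ^ k).
Proof. apply block_sum_pairs. Qed.

Lemma dyadic_block_pos a k : (forall n, (1 <= n)%nat -> 0 < a n) -> 0 < dyadic_block a k.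
Proof.
  intros ha; unfold dyadic_block; pose proof (Nat.pow_gt_lin_r 2 k ltac:(lia)).
  destruct (2 ^ k)%nat as [|l] eqn:E; [lia|]; simpl.
  apply Rplus_le_lt_0_compat; [apply block_sum_ge0; intros; left|]; apply ha; lia.
Qed.

Lemma sum_n_succ_block_sum (a : nat -> R) N :
  sum_n (fun n => a (S n)) N = block_sum a 1 (S N).
Proof.
  induction N as [|N IH]; [now rewrite sum_O; simpl; ring|].
  now rewrite sum_Sn, IH.
Qed.

Lemma ex_series_iff_dyadic_bounded (a : nat -> R) :
  (forall n, (1 <= n)%nat -> 0 <= a n) ->
  ex_series (fun n => a (S n)) <-> exists B, forall K, block_sum (dyadic_block a) 0 K <= B.
Proof.
  intros ha.
  assert (Hincr : forall N, sum_n (fun n => a (S n)) N <= sum_n (fun n => a (S n)) (S N)).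
  { intros N; rewrite sum_Sn; unfold plus; simpl; pose proof (ha (S (S N)) ltac:(lia)); lra. }
  split.
  - intros [l Hl]; exists l; intros K.
    rewrite <- block_sum_dyadic.
    apply Rle_trans with (sum_n (fun n => a (S n)) (2 ^ K)).
    + rewrite sum_n_succ_block_sum; apply block_sum_le_length; [intros; apply ha|]; lia.
    + exact (is_lim_seq_incr_compare _ l Hl Hincr _).
  - intros [B HB].
    destruct (ex_finite_lim_seq_incr (sum_n (fun n => a (S n))) B Hincr) as [l Hl].
    + intros N; rewrite sum_n_succ_block_sum; eapply Rle_trans; [|apply (HB (S N))].
      rewrite <- block_sum_dyadic; apply block_sum_le_length; [intros; apply ha; lia|].
      pose proof (Nat.pow_gt_lin_r 2 (S N) ltac:(lia)); lia.
    + now exists l.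
Qed.

Lemma kummer_telescope (t c : nat -> R) (d : R) (K0 : nat) :
  (forall k, (K0 <= k)%nat -> d * t (S k) <= c k * t k - c (S k) * t (S k)) ->
  forall j, d * block_sum t (S K0) j <= c K0 * t K0 - c (K0 + j)%nat * t (K0 + j)%nat.
Proof.
  intros Hstep j; induction j as [|j IH].
  - rewrite Nat.add_0_r; simpl; lra.
  - rewrite Nat.add_succ_r; simpl.
    specialize (Hstep (K0 + j)%nat ltac:(lia)); lra.
Qed.

Lemma kummer_bounded (t c : nat -> R) (d : R) (K0 : nat) :
  0 < d -> (forall k, 0 <= t k) -> (forall k, (K0 <= k)%nat -> 0 <= c k) ->
  (forall k, (K0 <= k)%nat -> d * t (S k) <= c k * t k - c (S k) * t (S k)) ->
  exists B, forall K, block_sum t 0 K <= B.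
Proof.
  intros Hd Ht Hc Hstep.
  exists (block_sum t 0 (S K0) + c K0 * t K0 / d); intros K.
  apply Rle_trans with (block_sum t 0 (S K0 + K)).
  { apply block_sum_le_length; [intros; apply Ht | lia]. }
  rewrite block_sum_add, Nat.add_0_l.
  apply Rplus_le_compat_l.
  pose proof (kummer_telescope t c d K0 Hstep K) as Htel.
  assert (0 <= c (K0 + K)%nat * t (K0 + K)%nat) by (apply Rmult_le_pos; [apply Hc; lia | apply Ht]).
  apply (Rmult_le_reg_l d); [exact Hd|].
  replace (d * (c K0 * t K0 / d)) with (c K0 * t K0) by (field; lra).
  lra.
Qed.

Lemma kummer_unbounded (t c : nat -> R) (m : nat) :
  (forall k, 0 <= t k) -> (forall k, (m <= k)%nat -> 0 < c k) ->
  (forall k, (m <= k)%nat -> c k * t k <= c (S k) * t (S k)) -> 0 < t m ->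
  ~ (exists B, forall L, block_sum (fun k => / c k) m L <= B) ->
  ~ (exists B, forall K, block_sum t 0 K <= B).
Proof.
  intros Ht Hc Hstep Htm Hinv [B HB]; apply Hinv.
  set (A := c m * t m).
  assert (HA : 0 < A) by (apply Rmult_lt_0_compat; [apply Hc; lia | exact Htm]).
  assert (Hgrow : forall k, (m <= k)%nat -> A <= c k * t k).
  { intros k Hk; induction Hk as [|k Hk IH]; [unfold A; lra|].
    eapply Rle_trans; [exact IH | apply Hstep; exact Hk]. }
  exists (B / A); intros L.
  apply (Rmult_le_reg_l A); [exact HA|].
  replace (A * (B / A)) with B by (field; lra).
  rewrite <- block_sum_scal.
  apply Rle_trans with (block_sum t m L).
  - apply block_sum_le; intros k Hk.
    pose proof (Hc k ltac:(lia)); pose proof (Hgrow k ltac:(lia)).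
    apply (Rmult_le_reg_l (c k)); [lra|].
    replace (c k * (A * / c k)) with A by (field; lra); lra.
  - specialize (HB (m + L)%nat); rewrite block_sum_add in HB.
    assert (0 <= block_sum t 0 m) by (apply block_sum_ge0; intros; apply Ht).
    simpl in HB; lra.
Qed.

Lemma ln_add_le (x y : R) : 0 < x -> 0 < x + y -> ln (x + y) <= ln x + y / x.
Proof.
  intros Hx Hxy.
  rewrite <- (ln_exp (ln x + y / x)); apply ln_le; [exact Hxy|].
  rewrite exp_plus, exp_ln by exact Hx.
  pose proof (exp_ineq1_le (y / x)).
  replace (x + y) with (x * (1 + y / x)) by (field; lra).
  apply Rmult_le_compat_l; lra.
Qed.

Lemma block_sum_inv_arith_unbounded (c : nat -> R) (h : R) (m : nat) :
  0 < h -> 0 < c m -> (forall k, (m <= k)%nat -> c (S k) = c k + h) ->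
  ~ (exists B, forall L, block_sum (fun k => / c k) m L <= B).
Proof.
  intros Hh Hcm Hc [B HB].
  assert (Hlin : forall L, c (m + L)%nat = c m + INR L * h).
  { induction L as [|L IH]; [rewrite Nat.add_0_r; simpl; ring|].
    rewrite Nat.add_succ_r, Hc, IH, S_INR by lia; ring. }
  assert (Hpos : forall L, 0 < c (m + L)%nat).
  { intros L; rewrite Hlin; pose proof (pos_INR L); nra. }
  assert (Hln : forall L, ln (c (m + L)%nat) <= ln (c m) + h * block_sum (fun k => / c k) m L).
  { induction L as [|L IH]; [rewrite Nat.add_0_r; simpl; lra|].
    rewrite Nat.add_succ_r, Hc by lia; simpl.
    pose proof (Hpos L).
    pose proof (ln_add_le (c (m + L)%nat) h ltac:(lra) ltac:(lra)).
    replace (h / c (m + L)%nat) with (h * / c (m + L)%nat) in * by reflexivity.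
    lra. }
  destruct (INR_archimed h (exp (ln (c m) + h * B))) as [L HL]; [exact Hh|].
  assert (Hlt : ln (c m) + h * B < ln (c (m + L)%nat)).
  { rewrite <- (ln_exp (ln (c m) + h * B)).
    apply ln_increasing; [apply exp_pos|].
    rewrite Hlin; lra. }
  specialize (Hln L); specialize (HB L).
  assert (h * block_sum (fun k => / c k) m L <= h * B) by (apply Rmult_le_compat_l; lra).
  lra.
Qed.

Lemma ln_2_pos : 0 < ln 2.
Proof. rewrite <- ln_1; apply ln_increasing; lra. Qed.

Definition ln_dyadic (lambda : R) (k : nat) : R := ln lambda + INR k * ln 2.

Lemma ln_dyadic_S lambda k : ln_dyadic lambda (S k) = ln_dyadic lambda k + ln 2.
Proof. unfold ln_dyadic; rewrite S_INR; ring. Qed.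

Lemma ln_dyadic_eventually_gt lambda x :
  exists K, forall k, (K <= k)%nat -> x < ln_dyadic lambda k.
Proof.
  destruct (INR_archimed (ln 2) (x - ln lambda) ln_2_pos) as [K HK].
  exists K; intros k Hk; unfold ln_dyadic.
  pose proof (le_INR _ _ Hk); pose proof ln_2_pos; nra.
Qed.

Lemma ln_dyadic_bounds lambda k n :
  0 < lambda -> (2 ^ k <= n < 2 ^ S k)%nat ->
  ln_dyadic lambda k <= ln (lambda * INR n) <= ln_dyadic lambda (S k).
Proof.
  intros Hl Hn.
  assert (Hpow : forall j, ln_dyadic lambda j = ln (lambda * INR (2 ^ j))).
  { intros j; unfold ln_dyadic.
    rewrite pow_INR, ln_mult, ln_pow by (try apply pow_lt; simpl; lra).
    simpl; do 2 f_equal; ring. }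
  pose proof (Nat.pow_gt_lin_r 2 k ltac:(lia)).
  assert (0 < INR (2 ^ k)) by (apply lt_0_INR; lia).
  rewrite !Hpow; split; apply ln_le.
  - apply Rmult_lt_0_compat; lra.
  - apply Rmult_le_compat_l; [lra | apply le_INR; lia].
  - apply Rmult_lt_0_compat; [lra | apply lt_0_INR; lia].
  - apply Rmult_le_compat_l; [lra | apply le_INR; lia].
Qed.

Lemma lt_of_ratio_gt (an x l q : R) :
  0 < an -> 0 < l -> q < l * (1/2 - x / an) -> x < (1/2 - q / l) * an.
Proof.
  intros Han Hl Hq.
  assert (q / l < 1/2 - x / an).
  { apply (Rmult_lt_reg_l l); [exact Hl|]. replace (l * (q / l)) with q by (field; lra). exact Hq. }
  replace x with (x / an * an) at 1 by (field; lra).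
  apply Rmult_lt_compat_r; lra.
Qed.

Lemma gt_of_ratio_lt (an x l q : R) :
  0 < an -> 0 < l -> l * (1/2 - x / an) < q -> (1/2 - q / l) * an < x.
Proof.
  intros Han Hl Hq.
  assert (1/2 - x / an < q / l).
  { apply (Rmult_lt_reg_l l); [exact Hl|]. replace (l * (q / l)) with q by (field; lra). exact Hq. }
  replace x with (x / an * an) at 1 by (field; lra).
  apply Rmult_lt_compat_r; lra.
Qed.

Lemma div_le_div_l (q l L : R) : 0 <= q -> 0 < l <= L -> q / L <= q / l.
Proof.
  intros Hq Hl; apply Rmult_le_compat_l; [exact Hq|].
  apply Rinv_le_contravar; lra.
Qed.

Lemma pair_le_of_ratio_gt (an a0 a1 l L q : R) :
  0 < an -> 0 < l <= L -> 0 <= q ->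
  q < l * (1/2 - a0 / an) -> q < l * (1/2 - a1 / an) ->
  a0 + a1 <= (1 - 2 * q / L) * an.
Proof.
  intros Han Hl Hq H0 H1.
  apply lt_of_ratio_gt in H0, H1; try lra.
  pose proof (div_le_div_l q l L Hq Hl).
  unfold Rdiv in *; nra.
Qed.

Lemma pair_ge_of_ratio_lt (an a0 a1 l D q : R) :
  0 < an -> 0 < D <= l -> 0 <= q ->
  l * (1/2 - a0 / an) < q -> l * (1/2 - a1 / an) < q ->
  (1 - 2 * q / D) * an <= a0 + a1.
Proof.
  intros Han Hl Hq H0 H1.
  apply gt_of_ratio_lt in H0, H1; try lra.
  pose proof (div_le_div_l q D l Hq Hl).
  unfold Rdiv in *; nra.
Qed.

Lemma dyadic_block_le_of_ratio_gt a lambda q k :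
  (forall n, (1 <= n)%nat -> 0 < a n) -> 0 < lambda -> 0 <= q -> 0 < ln_dyadic lambda k ->
  (forall n, (2 ^ k <= n < 2 ^ S k)%nat -> q < ratio_seq a lambda 0 n /\ q < ratio_seq a lambda 1 n) ->
  dyadic_block a (S k) <= (1 - 2 * q / ln_dyadic lambda (S k)) * dyadic_block a k.
Proof.
  intros Ha Hl Hq Hk Hratio.
  rewrite dyadic_block_succ; unfold dyadic_block; rewrite <- block_sum_scal.
  apply block_sum_le; intros n Hn.
  assert (Hnk : (2 ^ k <= n < 2 ^ S k)%nat) by (simpl; lia).
  destruct (Hratio n Hnk) as [H0 H1]; unfold ratio_seq in H0, H1.
  rewrite Nat.add_0_r in H0.
  destruct (ln_dyadic_bounds lambda k n Hl Hnk).
  pose proof (Nat.pow_gt_lin_r 2 k ltac:(lia)).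
  apply (pair_le_of_ratio_gt _ _ _ (ln (lambda * INR n))); try lra.
  apply Ha; lia.
Qed.

Lemma dyadic_block_ge_of_ratio_lt a lambda q k :
  (forall n, (1 <= n)%nat -> 0 < a n) -> 0 < lambda -> 0 <= q -> 0 < ln_dyadic lambda k ->
  (forall n, (2 ^ k <= n < 2 ^ S k)%nat -> ratio_seq a lambda 0 n < q /\ ratio_seq a lambda 1 n < q) ->
  (1 - 2 * q / ln_dyadic lambda k) * dyadic_block a k <= dyadic_block a (S k).
Proof.
  intros Ha Hl Hq Hk Hratio.
  rewrite dyadic_block_succ; unfold dyadic_block; rewrite <- block_sum_scal.
  apply block_sum_le; intros n Hn.
  assert (Hnk : (2 ^ k <= n < 2 ^ S k)%nat) by (simpl; lia).
  destruct (Hratio n Hnk) as [H0 H1]; unfold ratio_seq in H0, H1.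
  rewrite Nat.add_0_r in H0.
  destruct (ln_dyadic_bounds lambda k n Hl Hnk).
  pose proof (Nat.pow_gt_lin_r 2 k ltac:(lia)).
  apply (pair_ge_of_ratio_lt _ _ _ (ln (lambda * INR n))); try lra.
  apply Ha; lia.
Qed.

Lemma contraction_step (L q t t' : R) :
  0 < L -> 0 <= q -> 0 <= t -> t' <= (1 - 2 * q / L) * t -> (L + 2 * q) * t' <= L * t.
Proof.
  intros HL Hq Ht H.
  assert (H1 : L * t' <= (L - 2 * q) * t).
  { replace ((L - 2 * q) * t) with (L * ((1 - 2 * q / L) * t)) by (field; lra).
    apply Rmult_le_compat_l; lra. }
  assert (H2 : (L + 2 * q) * (L * t') <= (L + 2 * q) * ((L - 2 * q) * t))
    by (apply Rmult_le_compat_l; lra).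
  apply (Rmult_le_reg_l L); [exact HL|].
  nra.
Qed.

Lemma expansion_step (D c q t t' : R) :
  0 < D -> 0 < c -> 0 <= t -> 2 * q * c <= D * (c - 2 * q) ->
  (1 - 2 * q / D) * t <= t' -> D * t <= (D + c) * t'.
Proof.
  intros HD Hc Ht Hqc H.
  assert (H1 : (D - 2 * q) * t <= D * t').
  { replace ((D - 2 * q) * t) with (D * ((1 - 2 * q / D) * t)) by (field; lra).
    apply Rmult_le_compat_l; lra. }
  apply (Rmult_le_reg_l D); [exact HD|].
  nra.
Qed.

Proposition ex_series_of_ratio_gt (a : nat -> R) (lambda q : R) (N : nat) :
  (forall n, (1 <= n)%nat -> 0 < a n) -> 0 < lambda -> ln 2 / 2 < q ->
  (forall n, (N <= n)%nat -> q < ratio_seq a lambda 0 n /\ q < ratio_seq a lambda 1 n) ->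
  ex_series (fun n => a (S n)).
Proof.
  intros Ha Hl Hq Hratio.
  pose proof ln_2_pos.
  destruct (ln_dyadic_eventually_gt lambda 0) as [K HK].
  apply ex_series_iff_dyadic_bounded; [intros n Hn; left; apply Ha, Hn|].
  apply (kummer_bounded _ (fun k => ln_dyadic lambda (S k)) (2 * q - ln 2) (Nat.max K N)).
  - lra.
  - intros k; left; apply dyadic_block_pos, Ha.
  - intros k Hk; left; apply HK; lia.
  - intros k Hk; rewrite (ln_dyadic_S lambda (S k)).
    assert (Hblock : dyadic_block a (S k) <= (1 - 2 * q / ln_dyadic lambda (S k)) * dyadic_block a k).
    { apply dyadic_block_le_of_ratio_gt; [exact Ha | exact Hl | lra | apply HK; lia |].
      intros n Hn; apply Hratio.
      pose proof (Nat.pow_gt_lin_r 2 k ltac:(lia)); lia. }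
    pose proof (dyadic_block_pos a k Ha).
    apply contraction_step in Hblock; [lra | apply HK; lia | lra | lra].
Qed.

Proposition not_ex_series_of_ratio_lt (a : nat -> R) (lambda q : R) (N : nat) :
  (forall n, (1 <= n)%nat -> 0 < a n) -> 0 < lambda -> q < ln 2 / 2 ->
  (forall n, (N <= n)%nat -> ratio_seq a lambda 0 n < q /\ ratio_seq a lambda 1 n < q) ->
  ~ ex_series (fun n => a (S n)).
Proof.
  intros Ha Hl Hq Hratio.
  pose proof ln_2_pos.
  (* The ratio bounds only pass from ln(lambda n) to D_k for nonnegative q. *)
  set (q' := Rmax q 0).
  assert (Hq' : q <= q' /\ 0 <= q' < ln 2 / 2)
    by (unfold q'; repeat split; [apply Rmax_l | apply Rmax_r | apply Rmax_lub_lt; lra]).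
  assert (Hthreshold : 0 <= 2 * q' * ln 2 / (ln 2 - 2 * q'))
    by (apply Rmult_le_pos; [nra | left; apply Rinv_0_lt_compat; lra]).
  destruct (ln_dyadic_eventually_gt lambda (2 * q' * ln 2 / (ln 2 - 2 * q'))) as [K HK].
  rewrite ex_series_iff_dyadic_bounded by (intros n Hn; left; apply Ha, Hn).
  apply (kummer_unbounded _ (ln_dyadic lambda) (Nat.max K N)).
  - intros k; left; apply dyadic_block_pos, Ha.
  - intros k Hk; specialize (HK k ltac:(lia)); lra.
  - intros k Hk; rewrite ln_dyadic_S.
    specialize (HK k ltac:(lia)).
    apply (expansion_step _ _ q'); [lra | lra | left; apply dyadic_block_pos, Ha | |].
    + apply Rlt_le, (Rmult_lt_reg_r (/ (ln 2 - 2 * q'))); [apply Rinv_0_lt_compat; lra|].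
      replace (ln_dyadic lambda k * (ln 2 - 2 * q') * / (ln 2 - 2 * q'))
        with (ln_dyadic lambda k) by (field; lra).
      exact HK.
    + apply dyadic_block_ge_of_ratio_lt; [exact Ha | exact Hl | lra | lra |].
      intros n Hn; destruct (Hratio n) as [H0 H1]; [|lra].
      pose proof (Nat.pow_gt_lin_r 2 k ltac:(lia)); lia.
  - apply dyadic_block_pos, Ha.
  - apply block_sum_inv_arith_unbounded with (h := ln 2); [lra | |].
    + specialize (HK (Nat.max K N) ltac:(lia)); lra.
    + intros k _; apply ln_dyadic_S.
Qed.

Theorem theorem2p1 (a : nat -> R) (lambda : R)
  (ha : forall n : nat, (1 <= n)%nat -> 0 < a n) (hl : 0 < lambda) :
  let m := Rbar_min (LimInf_seq (ratio_seq a lambda 0)) (LimInf_seq (ratio_seq a lambda 1)) in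
  let M := Rbar_max (LimSup_seq (ratio_seq a lambda 0)) (LimSup_seq (ratio_seq a lambda 1)) in
  (Rbar_lt (Finite (ln 2 / 2)) m -> ex_series (fun n => a (S n))) /\
  (Rbar_lt M (Finite (ln 2 / 2)) -> ~ ex_series (fun n => a (S n))).
Proof.
  intros m M; split; intros H.
  - destruct (Rbar_min_LimInf_seq_gt _ _ _ H) as (q & N & Hq & HN).
    exact (ex_series_of_ratio_gt a lambda q N ha hl Hq HN).
  - destruct (Rbar_max_LimSup_seq_lt _ _ _ H) as (q & N & Hq & HN).
    exact (not_ex_series_of_ratio_lt a lambda q N ha hl Hq HN).
Qed.
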